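(* Let $f(t)$ be a solution of the kinetic Kuramoto model for non-identical oscillators with coupling $K>0$ and initial datum $f_0$ with $\int\omega^2 g(\omega)d\omega<\infty$. Then the functional $$\mathcal H_f(t)=\int_{[-\pi,\pi)\times\mathbb R}\Theta(t,\vartheta,\omega)\,\omega\,f_0(\vartheta,\omega)\,d\vartheta\,d\omega+K\frac{R(t)^2}{2}$$ is non-decreasing in $t$.
   Context: Kinetic Kuramoto model for non-identical oscillators: $f(t)$ is a probability measure on $\mathcal T\times\mathbb R$, $\mathcal T=\mathbb R/2\pi\mathbb Z$, given via characteristics $\dot\Theta(t,\vartheta,\omega)=\omega-KR(t)\sin(\Theta(t,\vartheta,\omega)-\varphi(t))$, $\Theta(0,\vartheta,\omega)=\vartheta$ (real-valued, with $\vartheta\in[-\pi,\pi)$), $R(t)e^{\mathrm{i}\varphi(t)}=\int e^{\mathrm{i}\vartheta}f(t,\vartheta,\omega)d\vartheta d\omega$, and $f(t)$ is the push-forward of $f_0$ by $(\vartheta,\omega)\mapsto(\Theta(t,\vartheta,\omega),\omega)$. $g$ is the $\omega$-marginal of $f_0$. *)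

From HB Require Import structures.
From mathcomp Require Import all_boot all_order all_algebra.
From mathcomp Require Import all_classical all_reals all_analysis.
Set Implicit Arguments. Unset Strict Implicit. Unset Printing Implicit Defensive.
Import Order.TTheory GRing.Theory Num.Theory.
Import numFieldNormedType.Exports.
Local Open Scope classical_set_scope.
Local Open Scope ring_scope.

(* A point (vartheta, omega) of [-pi,pi) x R is represented as x : R * R,
   x.1 = vartheta, x.2 = omega.  f0 is a probability measure on R * R
   concentrated on [-pi,pi) x R (the fundamental domain of the torus). *)

(* The characteristic flow Theta, together with the order parameter R(t) and
   phase phi(t), is a solution of the kinetic Kuramoto model with coupling K
   and initial datum f0:
   - Theta t (.,.) is measurable for every t,
   - R(t) e^{i phi(t)} = \int e^{i Theta(t,th,om)} f0(dth,dom)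
     (f(t) is the push-forward of f0 by (th,om) |-> (Theta(t,th,om),om)),
     written via real and imaginary parts, with R(t) >= 0,
   - Theta(0,th,om) = th, Theta(.,th,om) continuous on [0,+oo) and
     d/dt Theta = om - K R(t) sin(Theta - phi(t)) for t > 0. *)
Definition kuramoto_solution (R : realType) (f0 : probability (R * R)%type R)
  (K : R) (Theta : R -> R -> R -> R) (Rf phi : R -> R) : Prop :=
  (forall t, measurable_fun setT (fun x : R * R => Theta t x.1 x.2)) /\
  (forall t, 0 <= Rf t /\
     Rf t * cos (phi t) = Rintegral f0 setT (fun x => cos (Theta t x.1 x.2)) /\
     Rf t * sin (phi t) = Rintegral f0 setT (fun x => sin (Theta t x.1 x.2))) /\
  (forall th om : R, Theta 0 th om = th) /\
  (forall th om : R, {within `[0, +oo[, continuous (fun s => Theta s th om)}) /\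
  (forall (th om t : R), 0 < t ->
     is_derive t (1 : R) (fun s => Theta s th om)
       (om - K * Rf t * sin (Theta t th om - phi t))).

Definition H_functional (R : realType) (f0 : probability (R * R)%type R)
  (K : R) (Theta : R -> R -> R -> R) (Rf : R -> R) (t : R) : R :=
  Rintegral f0 setT (fun x => Theta t x.1 x.2 * x.2) + K * (Rf t ^+ 2) / 2.

From HB Require Import structures.
From mathcomp Require Import all_boot all_order all_algebra.
From mathcomp Require Import all_classical all_reals all_analysis.
From mathcomp Require Import ring lra measurable_realfun.
Import Order.TTheory GRing.Theory Num.Theory.
Import numFieldNormedType.Exports.
Local Open Scope classical_set_scope.
Local Open Scope ring_scope.

(* Formally dH/dt = \int (d Theta/dt)^2 f0 >= 0: the transport term
   \int (d Theta/dt) omega and the derivative K R R' of the interaction term add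
   up to the square of the velocity.  To avoid differentiating under the
   integral we prove the discrete form H(r + h) >= H(r) - M h^2: expanding Theta,
   cos and sin to second order around time r, the first-order terms combine into
   h \int v^2 >= 0, while every remainder is bounded by h^2 times a multiple of
   1 + omega^2, which is integrable.  Subdividing [s, t] into n steps gives
   H(t) >= H(s) - M (t - s)^2 / n for every n. *)

Section MeanValueBounds.
Context {R : realType}.

Lemma MVT_le {f df : R -> R} {a b M : R} : a <= b ->
  (forall x, x \in `]a, b[ -> is_derive x 1 f (df x)) ->
  {within `[a, b], continuous f} ->
  (forall c, a <= c <= b -> `|df c| <= M) ->
  `|f b - f a| <= M * (b - a).
Proof.
move=> ab fd fc bd; have [c cab ->] := MVT_segment ab fd fc.
have ba : 0 <= b - a by rewrite subr_ge0.
rewrite normrM (ger0_norm ba); apply: (ler_wpM2r ba).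
by apply: bd; move: cab; rewrite in_itv.
Qed.

Lemma MVT_taylor1_le {f df : R -> R} {a b L : R} : a <= b ->
  (forall x, x \in `]a, b[ -> is_derive x 1 f (df x)) ->
  {within `[a, b], continuous f} -> 0 <= L ->
  (forall c, a <= c <= b -> `|df c - df a| <= L * (c - a)) ->
  `|f b - f a - (b - a) * df a| <= L * (b - a) ^+ 2.
Proof.
move=> ab fd fc L0 bd; have [c cab ->] := MVT_segment ab fd fc.
move: cab; rewrite in_itv /= => /andP[ac cb].
have ba : 0 <= b - a by rewrite subr_ge0.
rewrite [(b - a) * _]mulrC -mulrBl normrM (ger0_norm ba) expr2 mulrA.
apply: (ler_wpM2r ba); apply: (le_trans (bd c _)); first by rewrite ac cb.
by apply: (ler_wpM2l L0); rewrite lerD2r.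
Qed.

End MeanValueBounds.

Section TrigBounds.
Context {R : realType}.
Implicit Types x y u d : R.

Lemma dist_sin_le x y : `|sin y - sin x| <= `|y - x|.
Proof.
wlog xy : x y / x <= y.
  by move=> H; have [/H//|/ltW/H] := leP x y; rewrite distrC (distrC y).
have yx : 0 <= y - x by rewrite subr_ge0.
rewrite (ger0_norm yx) -[leRHS]mul1r.
apply: (@MVT_le _ sin cos x y 1 xy) => [|c _]; last exact: cos_max.
exact/continuous_subspaceT/continuous_sin.
Qed.

Lemma dist_cos_le x y : `|cos y - cos x| <= `|y - x|.
Proof.
wlog xy : x y / x <= y.
  by move=> H; have [/H//|/ltW/H] := leP x y; rewrite distrC (distrC y).
have yx : 0 <= y - x by rewrite subr_ge0.
rewrite (ger0_norm yx) -[leRHS]mul1r.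
apply: (@MVT_le _ cos (fun z => - sin z) x y 1 xy) => [|c _]; last by rewrite normrN sin_max.
exact/continuous_subspaceT/continuous_cos.
Qed.

Lemma sin_sub_id_le d : `|sin d - d| <= d ^+ 2.
Proof.
wlog d0 : d / 0 <= d.
  move=> H; have [/H//|/ltW d0] := leP 0 d.
  by have := H (- d); rewrite oppr_ge0 sinN -opprD normrN sqrrN => ->.
have := @MVT_taylor1_le _ sin cos 0 d 1 d0 (fun z _ => is_derive_sin z)
  (continuous_subspaceT (@continuous_sin R)) ler01.
rewrite sin0 cos0 !subr0 mulr1 mul1r; apply=> c /andP[c0 _].
by have := dist_cos_le 0 c; rewrite cos0 !subr0 (ger0_norm c0) mul1r.
Qed.

Lemma cos_sub1_le d : `|cos d - 1| <= d ^+ 2.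
Proof.
wlog d0 : d / 0 <= d.
  move=> H; have [/H//|/ltW d0] := leP 0 d.
  by have := H (- d); rewrite oppr_ge0 cosN sqrrN => ->.
have := @MVT_taylor1_le _ cos (fun z => - sin z) 0 d 1 d0
  (fun z _ => is_derive_cos z) (continuous_subspaceT (@continuous_cos R)) ler01.
rewrite sin0 cos0 !subr0 oppr0 mulr0 subr0 mul1r; apply=> c /andP[c0 _].
have := dist_sin_le 0 c.
by rewrite sin0 !subr0 addr0 normrN (ger0_norm c0) mul1r.
Qed.

Lemma cosD_taylor_le u d : `|cos (u + d) - cos u + d * sin u| <= 2 * d ^+ 2.
Proof.
have -> : cos (u + d) - cos u + d * sin u =
   cos u * (cos d - 1) - sin u * (sin d - d) by rewrite cosD; ring.
rewrite mulr2n mulrDl mul1r; apply: (le_trans (ler_normB _ _)).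
by rewrite !normrM lerD // -[leRHS]mul1r ler_pM ?(cos_max, sin_max, sin_sub_id_le, cos_sub1_le).
Qed.

Lemma sinD_taylor_le u d : `|sin (u + d) - sin u - d * cos u| <= 2 * d ^+ 2.
Proof.
have -> : sin (u + d) - sin u - d * cos u =
   sin u * (cos d - 1) + cos u * (sin d - d) by rewrite sinD; ring.
rewrite mulr2n mulrDl mul1r; apply: (le_trans (ler_normD _ _)).
by rewrite !normrM lerD // -[leRHS]mul1r ler_pM ?(cos_max, sin_max, sin_sub_id_le, cos_sub1_le).
Qed.

End TrigBounds.

Lemma nondecreasing_of_quadratic_defect (R : realType) (F : R -> R) (M : R) :
  (forall r h, 0 <= r -> 0 <= h -> F r - h ^+ 2 * M <= F (r + h)) ->
  forall s t, 0 <= s -> s <= t -> F s <= F t.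
Proof.
move=> step s t s0 st.
have chain h n : 0 <= h -> F s - n%:R * (h ^+ 2 * M) <= F (s + n%:R * h).
  move=> h0; elim: n => [|n IH]; first by rewrite !mul0r subr0 addr0.
  have := step (s + n%:R * h) h (addr_ge0 s0 (mulr_ge0 (ler0n _ _) h0)) h0.
  rewrite -natr1 !mulrDl !mul1r addrA; lra.
apply/ler_addgt0Pr => e e0; set c := (t - s) ^+ 2 * M.
pose n := (Num.truncn (c / e)).+1; have n_gt0 : 0 < n%:R :> R by rewrite ltr0n.
have c_le : c / n%:R <= e.
  by rewrite ler_pdivrMr // mulrC -ler_pdivrMr //; exact/ltW/truncnS_gt.
have h0 : 0 <= (t - s) / n%:R by rewrite divr_ge0 // subr_ge0.
have := chain _ n h0.
have -> : s + n%:R * ((t - s) / n%:R) = t by field; rewrite gt_eqF.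
have -> : n%:R * (((t - s) / n%:R) ^+ 2 * M) = c / n%:R by rewrite /c; field; rewrite gt_eqF.
lra.
Qed.

Section DominatedIntegrals.
Context {d : measure_display} {T : measurableType d} {R : realType}.
Context {mu : {measure set T -> \bar R}}.

Lemma integrableD_EFin {f g : T -> R} :
  mu.-integrable setT (EFin \o f) -> mu.-integrable setT (EFin \o g) ->
  mu.-integrable setT (EFin \o fun x => f x + g x).
Proof. by move=> if_ ig; exact: (integrableD _ if_ ig). Qed.

Lemma integrableB_EFin {f g : T -> R} :
  mu.-integrable setT (EFin \o f) -> mu.-integrable setT (EFin \o g) ->
  mu.-integrable setT (EFin \o fun x => f x - g x).
Proof. by move=> if_ ig; exact: (integrableB _ if_ ig). Qed.

Lemma integrableZl_EFin (k : R) {f : T -> R} :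
  mu.-integrable setT (EFin \o f) -> mu.-integrable setT (EFin \o fun x => k * f x).
Proof. by move=> if_; exact: (integrableZl _ k if_). Qed.

Lemma integrable_EFin_le {f g : T -> R} : measurable_fun setT f ->
  mu.-integrable setT (EFin \o g) -> (forall x, `|f x| <= g x) ->
  mu.-integrable setT (EFin \o f).
Proof.
move=> mf ig fg; apply: le_integrable ig => //; first exact/measurable_EFinP.
by move=> x _; rewrite lee_fin (le_trans (fg x)) ?ler_norm.
Qed.

Lemma integrable_EFin_le_on {A : set T} {f g : T -> R} : measurable A ->
  mu (~` A) = 0%E -> measurable_fun setT f ->
  mu.-integrable setT (EFin \o g) -> (forall x, A x -> `|f x| <= g x) ->
  mu.-integrable setT (EFin \o f).
Proof.
move=> mA nA mf ig fg.
apply/(negligible_integrable _ _ _ nA) => //; first exact: measurableC.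
  exact/measurable_EFinP.
rewrite setTD setCK; apply: le_integrable (integrableS measurableT mA (@subsetT _ A) ig) => //.
  by apply/measurable_EFinP; apply: measurable_funS mf.
by move=> x Ax; rewrite lee_fin (le_trans (fg x Ax)) ?ler_norm.
Qed.

Lemma le_normr_Rintegral_le {f g : T -> R} :
  mu.-integrable setT (EFin \o f) -> mu.-integrable setT (EFin \o g) ->
  (forall x, `|f x| <= g x) ->
  `|Rintegral mu setT f| <= Rintegral mu setT g.
Proof.
move=> if_ ig fg; apply: (le_trans (le_normr_Rintegral _ _)) => //.
by apply: le_Rintegral => //; exact: integrable_norm.
Qed.

Lemma le_normr_RintegralB {f g h : T -> R} (k : R) :
  mu.-integrable setT (EFin \o f) -> mu.-integrable setT (EFin \o g) ->
  mu.-integrable setT (EFin \o h) -> (forall x, `|f x - g x| <= k * h x) ->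
  `|Rintegral mu setT f - Rintegral mu setT g| <= k * Rintegral mu setT h.
Proof.
move=> if_ ig ih fgh; rewrite -RintegralB // -RintegralZl //.
apply: le_normr_Rintegral_le fgh; first exact: integrableB_EFin.
exact: integrableZl_EFin.
Qed.

End DominatedIntegrals.

Lemma normrB_mul_le {R : realDomainType} (a0 a1 b0 b1 : R) :
  `|a0| <= 1 -> `|b1| <= 1 -> `|a1 * b1 - a0 * b0| <= `|a1 - a0| + `|b1 - b0|.
Proof.
move=> a01 b11; have -> : a1 * b1 - a0 * b0 = (a1 - a0) * b1 + a0 * (b1 - b0) by ring.
apply: (le_trans (ler_normD _ _)); rewrite !normrM.
by rewrite lerD // ?ler_piMr ?ler_piMl.
Qed.

Section KuramotoFunctional.
Variables (R : realType) (f0 : probability (R * R)%type R) (K : R).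
Variables (Theta : R -> R -> R -> R) (Rf phi : R -> R).
Hypothesis K_gt0 : 0 < K.
Hypothesis f0_support : f0 [set x | - pi <= x.1 < pi] = 1%E.
Hypothesis integrable_omega2 : f0.-integrable setT (fun x => (x.2 ^+ 2)%:E).
Hypothesis measurable_Theta :
  forall t, measurable_fun setT (fun x : R * R => Theta t x.1 x.2).
Hypothesis order_parameterE : forall t, 0 <= Rf t /\
  Rf t * cos (phi t) = Rintegral f0 setT (fun x => cos (Theta t x.1 x.2)) /\
  Rf t * sin (phi t) = Rintegral f0 setT (fun x => sin (Theta t x.1 x.2)).
Hypothesis Theta0 : forall th om : R, Theta 0 th om = th.
Hypothesis continuous_Theta :
  forall th om : R, {within `[0, +oo[, continuous (fun s => Theta s th om)}.
Hypothesis derive_Theta : forall th om t : R, 0 < t ->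
  is_derive t (1 : R) (fun s => Theta s th om)
    (om - K * Rf t * sin (Theta t th om - phi t)).

Implicit Types (x : R * R) (r t h : R).

Local Notation Th t x := (Theta t x.1 x.2).

Let K_ge0 : 0 <= K. Proof. exact: ltW. Qed.

Let integrable_f0_cst (c : R) : f0.-integrable setT (EFin \o fun=> c).
Proof. exact: finite_measure_integrable_cst. Qed.

Let Rintegral_f0_cst (c : R) : Rintegral f0 setT (fun=> c) = c.
Proof.
have f0T : fine (f0 setT) = 1 by rewrite probability_setT.
by rewrite Rintegral_cst // f0T mulr1.
Qed.

Lemma integrable_cos_Theta t : f0.-integrable setT (EFin \o fun x => cos (Th t x)).
Proof.
apply: (integrable_EFin_le _ (integrable_f0_cst 1)) => [|x]; last exact: cos_max.
apply: measurableT_comp (measurable_Theta t).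
exact: continuous_measurable_fun (@continuous_cos R).
Qed.

Lemma integrable_sin_Theta t : f0.-integrable setT (EFin \o fun x => sin (Th t x)).
Proof.
apply: (integrable_EFin_le _ (integrable_f0_cst 1)) => [|x]; last exact: sin_max.
apply: measurableT_comp (measurable_Theta t).
exact: continuous_measurable_fun (@continuous_sin R).
Qed.

Let Rcos t := Rintegral f0 setT (fun x => cos (Th t x)).
Let Rsin t := Rintegral f0 setT (fun x => sin (Th t x)).

Lemma norm_Rcos_le1 t : `|Rcos t| <= 1.
Proof.
have := le_normr_Rintegral_le (integrable_cos_Theta t) (integrable_f0_cst 1)
  (fun x => cos_max _).
by rewrite Rintegral_f0_cst.
Qed.

Lemma norm_Rsin_le1 t : `|Rsin t| <= 1.
Proof.
have := le_normr_Rintegral_le (integrable_sin_Theta t) (integrable_f0_cst 1)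
  (fun x => sin_max _).
by rewrite Rintegral_f0_cst.
Qed.

Lemma order_parameter_sqr t : Rf t ^+ 2 = Rcos t ^+ 2 + Rsin t ^+ 2.
Proof.
have [_ [eC eS]] := order_parameterE t.
by rewrite /Rcos /Rsin -eC -eS !exprMn -mulrDr cos2Dsin2 mulr1.
Qed.

Let vel t (x : R * R) := x.2 - K * (Rcos t * sin (Th t x) - Rsin t * cos (Th t x)).

Lemma derive_Theta_vel x t : 0 < t -> is_derive t 1 (fun s => Th s x) (vel t x).
Proof.
move=> t0; have := @derive_Theta x.1 x.2 t t0.
have [_ [eC eS]] := order_parameterE t.
by rewrite /vel /Rcos /Rsin -eC -eS sinB; congr is_derive; ring.
Qed.

Let speed x := `|x.2| + 2 * K.

Let speed_ge0 x : 0 <= speed x.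
Proof. by rewrite addr_ge0 ?mulr_ge0. Qed.

Lemma norm_vel_le t x : `|vel t x| <= speed x.
Proof.
have trig_le1 (u v : R) (p q : R) : `|u| <= 1 -> `|v| <= 1 -> `|u * sin p - v * cos q| <= 2.
  move=> u1 v1; apply: (le_trans (ler_normB _ _)); rewrite !normrM.
  by rewrite [2]mulr2n lerD // mulr_ile1 ?(sin_max, cos_max).
rewrite /vel /speed (le_trans (ler_normB _ _)) // lerD2l normrM (ger0_norm K_ge0).
by rewrite mulrC ler_wpM2r // trig_le1 ?(norm_Rcos_le1, norm_Rsin_le1).
Qed.

Let derive_Theta_itv x r1 r2 : 0 <= r1 ->
  forall z, z \in `]r1, r2[ -> is_derive z 1 (fun s => Th s x) (vel z x).
Proof.
move=> r10 z; rewrite in_itv /= => /andP[z1 _].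
exact/derive_Theta_vel/(le_lt_trans r10 z1).
Qed.

Let continuous_Theta_itv x r1 r2 : 0 <= r1 ->
  {within `[r1, r2], continuous (fun s => Th s x)}.
Proof.
move=> r10; apply: continuous_subspaceW (continuous_Theta x.1 x.2) => z /=.
by rewrite !in_itv /= andbT => /andP[z1 _]; exact: le_trans z1.
Qed.

Lemma Theta_lipschitz x r1 r2 : 0 <= r1 -> r1 <= r2 ->
  `|Th r2 x - Th r1 x| <= (r2 - r1) * speed x.
Proof.
move=> r10 r12; rewrite mulrC.
apply: (@MVT_le _ (fun s => Th s x) (fun s => vel s x) _ _ _ r12
  (derive_Theta_itv x _ r2 r10) (continuous_Theta_itv x _ r2 r10)).
by move=> c _; exact: norm_vel_le.
Qed.

Let weight x := 1 + x.2 ^+ 2.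

Let norm_le_weight x : `|x.2| <= weight x.
Proof.
have := sqr_ge0 (`|x.2| - 1); rewrite /weight -(real_normK (num_real x.2)).
by have := normr_ge0 x.2; nra.
Qed.

Lemma speed_le_weight x : speed x <= (1 + 2 * K) * weight x.
Proof.
have := norm_le_weight x; have := mulr_ge0 K_ge0 (sqr_ge0 x.2).
rewrite /speed /weight; lra.
Qed.

Lemma speed_sqr_le_weight x : speed x ^+ 2 <= (1 + 2 * K) ^+ 2 * weight x.
Proof.
have := ler_wpM2l K_ge0 (norm_le_weight x).
have := mulr_ge0 (mulr_ge0 K_ge0 K_ge0) (sqr_ge0 x.2); have := sqr_ge0 x.2.
rewrite /speed /weight -(real_normK (num_real x.2)); nra.
Qed.

Lemma integrable_weight : f0.-integrable setT (EFin \o weight).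
Proof. exact: integrableD_EFin (integrable_f0_cst 1) integrable_omega2. Qed.

Lemma integrable_speed : f0.-integrable setT (EFin \o speed).
Proof.
have m_speed : measurable_fun setT speed.
  apply: measurable_funD; last exact: measurable_cst.
  exact: measurableT_comp (@normr_measurable _ _) (@measurable_snd _ _ _ _).
apply: (integrable_EFin_le m_speed (integrableZl_EFin (1 + 2 * K) integrable_weight)).
by move=> x; rewrite (ger0_norm (speed_ge0 x)) speed_le_weight.
Qed.

Let mean_speed := Rintegral f0 setT (fun x => speed x).

Let mean_speed_ge0 : 0 <= mean_speed.
Proof. by apply: Rintegral_ge0 => x _; exact: speed_ge0. Qed.

Lemma Rcos_lipschitz r1 r2 : 0 <= r1 -> r1 <= r2 ->
  `|Rcos r2 - Rcos r1| <= (r2 - r1) * mean_speed.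
Proof.
move=> r10 r12; apply: le_normr_RintegralB => [|||x].
- exact: integrable_cos_Theta.
- exact: integrable_cos_Theta.
- exact: integrable_speed.
- exact: le_trans (dist_cos_le _ _) (Theta_lipschitz x _ _ r10 r12).
Qed.

Lemma Rsin_lipschitz r1 r2 : 0 <= r1 -> r1 <= r2 ->
  `|Rsin r2 - Rsin r1| <= (r2 - r1) * mean_speed.
Proof.
move=> r10 r12; apply: le_normr_RintegralB => [|||x].
- exact: integrable_sin_Theta.
- exact: integrable_sin_Theta.
- exact: integrable_speed.
- exact: le_trans (dist_sin_le _ _) (Theta_lipschitz x _ _ r10 r12).
Qed.

Let vel_lip x := 2 * K * (mean_speed + speed x).

Let vel_lip_ge0 x : 0 <= vel_lip x.
Proof. exact: mulr_ge0 (mulr_ge0 (ler0n _ 2) K_ge0) (addr_ge0 mean_speed_ge0 (speed_ge0 x)). Qed.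

Lemma vel_lipschitz x r1 r2 : 0 <= r1 -> r1 <= r2 ->
  `|vel r2 x - vel r1 x| <= vel_lip x * (r2 - r1).
Proof.
move=> r10 r12; have dTh := Theta_lipschitz x _ _ r10 r12.
have dsin := le_trans (dist_sin_le (Th r1 x) (Th r2 x)) dTh.
have dcos := le_trans (dist_cos_le (Th r1 x) (Th r2 x)) dTh.
have dC := normrB_mul_le _ (Rcos r2) (sin (Th r1 x)) _
  (norm_Rcos_le1 r1) (sin_max (Th r2 x)).
have dS := normrB_mul_le _ (Rsin r2) (cos (Th r1 x)) _
  (norm_Rsin_le1 r1) (cos_max (Th r2 x)).
have eq_vel : vel r2 x - vel r1 x = - K * ((Rcos r2 * sin (Th r2 x) - Rcos r1 * sin (Th r1 x))
   - (Rsin r2 * cos (Th r2 x) - Rsin r1 * cos (Th r1 x))) by rewrite /vel; ring.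
have -> : vel_lip x * (r2 - r1) =
  K * (2 * ((r2 - r1) * mean_speed) + 2 * ((r2 - r1) * speed x)) by rewrite /vel_lip; ring.
rewrite eq_vel normrM normrN (ger0_norm K_ge0) ler_wpM2l //.
apply: (le_trans (ler_normB _ _)).
have := Rcos_lipschitz _ _ r10 r12; have := Rsin_lipschitz _ _ r10 r12; lra.
Qed.

Lemma Theta_taylor x r h : 0 <= r -> 0 <= h ->
  `|Th (r + h) x - Th r x - h * vel r x| <= vel_lip x * h ^+ 2.
Proof.
move=> r0 h0; have rh : r <= r + h by rewrite lerDl.
have := @MVT_taylor1_le _ (fun s => Th s x) (fun s => vel s x) _ _ _ rh
  (derive_Theta_itv x _ (r + h) r0) (continuous_Theta_itv x _ (r + h) r0).
rewrite [r + h - r]addrC addKr; apply; first exact: vel_lip_ge0.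
by move=> c /andP[rc _]; exact: vel_lipschitz.
Qed.

Lemma integrable_fst_mul_snd : f0.-integrable setT (EFin \o fun x : R * R => x.1 * x.2).
Proof.
pose A := [set x : R * R | - pi <= x.1 < pi].
have mA : measurable A.
  have -> : A = `[- pi, pi[%classic `*` setT.
    by apply/seteqP; split=> x /=; rewrite in_itv /= /A /=; [move=> ?; split|case].
  exact: measurableX (measurable_itv _) measurableT.
have nA : f0 (~` A) = 0%E by rewrite probability_setC // f0_support subee.
apply: (integrable_EFin_le_on mA nA _ (integrableZl_EFin pi integrable_weight)).
  exact: measurable_funM measurable_fst measurable_snd.
move=> x /andP[x1 x2]; rewrite normrM ler_pM // ?norm_le_weight //.
by rewrite ler_norml x1 ltW.
Qed.

Lemma integrable_Theta_omega r : 0 <= r ->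
  f0.-integrable setT (EFin \o fun x => Th r x * x.2).
Proof.
move=> r0; have drift_le x : `|(Th r x - x.1) * x.2| <= r * (1 + 2 * K) * weight x.
  have := Theta_lipschitz x _ _ (lexx 0) r0; rewrite subr0 Theta0 => lip.
  have speed_omega : speed x * `|x.2| <= (1 + 2 * K) * weight x.
    have := ler_wpM2l (mulr_ge0 (ler0n _ 2) K_ge0) (norm_le_weight x).
    have := real_normK (num_real x.2); rewrite /speed /weight; nra.
  rewrite normrM; apply: le_trans (ler_wpM2r (normr_ge0 _) lip) _.
  by rewrite -!mulrA ler_wpM2l.
have int_drift : f0.-integrable setT (EFin \o fun x => (Th r x - x.1) * x.2).
  apply: (integrable_EFin_le _ (integrableZl_EFin (r * (1 + 2 * K)) integrable_weight)) drift_le.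
  apply: measurable_funM measurable_snd; apply: measurable_funB measurable_fst.
  exact: measurable_Theta.
apply: eq_integrable (integrableD_EFin int_drift integrable_fst_mul_snd) => // x _ /=.
by congr EFin; ring.
Qed.

(* H (r + h) - H r = \int increment r h
     + K/2 ((Rcos (r + h) - Rcos r)^2 + (Rsin (r + h) - Rsin r)^2). *)
Let increment r h x := Th (r + h) x * x.2 - Th r x * x.2
  + K * (Rcos r * (cos (Th (r + h) x) - cos (Th r x))
         + Rsin r * (sin (Th (r + h) x) - sin (Th r x))).

Lemma increment_ge r h x : 0 <= r -> 0 <= h ->
  - h ^+ 2 * (vel_lip x * speed x + 4 * K * speed x ^+ 2)
    <= increment r h x.
Proof.
move=> r0 h0; have tay := Theta_taylor x _ _ r0 h0.
have dTh : `|Th (r + h) x - Th r x| <= h * speed x.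
  by have := Theta_lipschitz x _ _ r0 (ler_wpDr h0 (lexx r)); rewrite addrAC subrr add0r.
have hv := norm_vel_le r x.
set u := Th r x in tay dTh *; set dl := Th (r + h) x - u in tay dTh *.
have eu : Th (r + h) x = u + dl by rewrite /dl; ring.
set w := vel r x in tay hv *.
have dl2 : dl ^+ 2 <= (h * speed x) ^+ 2.
  by rewrite -real_normK ?num_real // lerXn2r ?nnegrE ?mulr_ge0 ?speed_ge0.
have lin : - (vel_lip x * h ^+ 2 * speed x) <= dl * w.
  have -> : dl * w = h * w ^+ 2 + (dl - h * w) * w by ring.
  have := ler_norm (- ((dl - h * w) * w)); rewrite normrN normrM.
  have := ler_pM (normr_ge0 _) (normr_ge0 _) tay hv.
  have := mulr_ge0 h0 (sqr_ge0 w); lra.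
have quad : - (4 * (h * speed x) ^+ 2) <=
    Rcos r * (cos (u + dl) - cos u + dl * sin u) + Rsin r * (sin (u + dl) - sin u - dl * cos u).
  have bound (c e : R) : `|c| <= 1 -> `|e| <= 2 * dl ^+ 2 -> `|c * e| <= 2 * dl ^+ 2.
    by move=> c1 e2; rewrite normrM -[leRHS]mul1r ler_pM.
  have := bound _ _ (norm_Rcos_le1 r) (cosD_taylor_le u dl).
  have := bound _ _ (norm_Rsin_le1 r) (sinD_taylor_le u dl).
  move=> hS hC; have := ler_normD (Rcos r * (cos (u + dl) - cos u + dl * sin u))
    (Rsin r * (sin (u + dl) - sin u - dl * cos u)).
  have := ler_norm (- (Rcos r * (cos (u + dl) - cos u + dl * sin u)
    + Rsin r * (sin (u + dl) - sin u - dl * cos u))); rewrite normrN; lra.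
have -> : increment r h x = dl * w + K * (Rcos r * (cos (u + dl) - cos u + dl * sin u)
    + Rsin r * (sin (u + dl) - sin u - dl * cos u)).
  by rewrite /increment -eu /w /vel /dl /u; ring.
have := ler_wpM2l K_ge0 quad; nra.
Qed.

Let defect_const := 2 * K * mean_speed * (1 + 2 * K) + 6 * K * (1 + 2 * K) ^+ 2.

Lemma defect_le_weight x :
  vel_lip x * speed x + 4 * K * speed x ^+ 2 <= defect_const * weight x.
Proof.
have := ler_wpM2l (mulr_ge0 (mulr_ge0 (ler0n _ 2) K_ge0) mean_speed_ge0) (speed_le_weight x).
have := ler_wpM2l (mulr_ge0 (ler0n _ 6) K_ge0) (speed_sqr_le_weight x).
rewrite /vel_lip /defect_const; nra.
Qed.

Let Rintegral_Theta_omega r := Rintegral f0 setT (fun x => Th r x * x.2).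

Lemma integrable_increment r h : 0 <= r -> 0 <= h ->
  f0.-integrable setT (EFin \o increment r h).
Proof.
move=> r0 h0; have rh0 : 0 <= r + h by exact: addr_ge0.
apply: integrableD_EFin; first exact: integrableB_EFin (integrable_Theta_omega _ rh0)
  (integrable_Theta_omega _ r0).
by apply/integrableZl_EFin/integrableD_EFin; apply/integrableZl_EFin/integrableB_EFin;
  rewrite ?integrable_cos_Theta ?integrable_sin_Theta.
Qed.

Lemma Rintegral_increment r h : 0 <= r -> 0 <= h ->
  Rintegral f0 setT (increment r h) =
  Rintegral_Theta_omega (r + h) - Rintegral_Theta_omega r
  + K * (Rcos r * (Rcos (r + h) - Rcos r) + Rsin r * (Rsin (r + h) - Rsin r)).
Proof.
move=> r0 h0; have rh0 : 0 <= r + h by exact: addr_ge0.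
have iT1 := integrable_Theta_omega _ rh0; have iT0 := integrable_Theta_omega _ r0.
have iC1 := integrable_cos_Theta (r + h); have iC0 := integrable_cos_Theta r.
have iS1 := integrable_sin_Theta (r + h); have iS0 := integrable_sin_Theta r.
have idC := integrableB_EFin iC1 iC0; have iC := integrableZl_EFin (Rcos r) idC.
have idS := integrableB_EFin iS1 iS0; have iS := integrableZl_EFin (Rsin r) idS.
rewrite /increment RintegralD //; last first.
- exact/integrableZl_EFin/integrableD_EFin.
- exact: integrableB_EFin.
rewrite RintegralB // RintegralZl; last exact: integrableD_EFin.
rewrite RintegralD // !RintegralZl ?RintegralB //.
exact: measurableT.
Qed.

Lemma H_functional_step r h : 0 <= r -> 0 <= h ->
  H_functional f0 K Theta Rf r - h ^+ 2 * (defect_const * Rintegral f0 setT weight)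
    <= H_functional f0 K Theta Rf (r + h).
Proof.
move=> r0 h0.
have int_ge : Rintegral f0 setT (fun x => - h ^+ 2 * (defect_const * weight x))
    <= Rintegral f0 setT (increment r h).
  apply: le_Rintegral => //.
  - exact/integrableZl_EFin/integrableZl_EFin/integrable_weight.
  - exact: integrable_increment.
  - move=> x _; apply: le_trans (increment_ge r h x r0 h0).
    by rewrite !mulNr lerN2 ler_wpM2l ?sqr_ge0 ?defect_le_weight.
rewrite Rintegral_increment // !RintegralZl // in int_ge; last first.
  exact/integrableZl_EFin/integrable_weight.
  exact: integrable_weight.
rewrite /H_functional !order_parameter_sqr -/(Rintegral_Theta_omega r) -/(Rintegral_Theta_omega (r + h)).
have := mulr_ge0 K_ge0 (addr_ge0 (sqr_ge0 (Rcos (r + h) - Rcos r)) (sqr_ge0 (Rsin (r + h) - Rsin r))).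
nra.
Qed.

Lemma H_functional_nondecreasing s t : 0 <= s -> s <= t ->
  H_functional f0 K Theta Rf s <= H_functional f0 K Theta Rf t.
Proof. exact: nondecreasing_of_quadratic_defect H_functional_step s t. Qed.

End KuramotoFunctional.

Theorem mainTheorem8 (R : realType) (f0 : probability (R * R)%type R) (K : R)
  (Theta : R -> R -> R -> R) (Rf phi : R -> R) :
  0 < K ->
  f0 [set x | - pi <= x.1 < pi] = 1%E ->
  f0.-integrable setT (fun x => (x.2 ^+ 2)%:E) ->
  kuramoto_solution f0 K Theta Rf phi ->
  forall s t, 0 <= s -> s <= t ->
    H_functional f0 K Theta Rf s <= H_functional f0 K Theta Rf t.
Proof.
move=> K_gt0 f0_support omega2 [mTh [order_param [Th0 [cTh dTh]]]].
exact: H_functional_nondecreasing K_gt0 f0_support omega2 mTh order_param Th0 cTh dTh.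
Qed.
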